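(* Let $\mathbf{C}$ be a positively graded $\Bbbk$-linear category and let $(\mathcal{X}^\bullet,d^\bullet)$ be a minimal complex of graded $\mathbf{C}$-modules each of whose components is a direct sum of modules of the form $\mathsf{P}(\lambda)\langle k\rangle$, $\lambda\in\operatorname{Ob}(\mathbf{C})$, $k\in\mathbb{Z}$. For $i,j\in\mathbb{Z}$ write $\mathcal{X}^j=\mathcal{X}\{>i\}^j\oplus\mathcal{X}\{=i\}^j\oplus\mathcal{X}\{<i\}^j$, where $\mathcal{X}\{>i\}^j$ (resp. $\mathcal{X}\{=i\}^j$, $\mathcal{X}\{<i\}^j$) is the sum of the indecomposable summands isomorphic to some $\mathsf{P}(\lambda)\langle k\rangle$ with $k>i$ (resp. $k=i$, $k<i$). Then for all $i,j\in\mathbb{Z}$ we have $d^j(\mathcal{X}\{>i\}^j)\subseteq\mathcal{X}\{>i+1\}^{j+1}$.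
   Context: $\Bbbk$ is a field. $\mathbf{C}$ positively graded means: morphism spaces are $\mathbb{Z}$-graded with composition adding degrees, $\mathbf{C}_i(\lambda,\mu)=0$ for $i<0$, $\mathbf{C}_0(\lambda,\mu)=0$ for $\lambda\ne\mu$ and $\mathbf{C}_0(\lambda,\lambda)=\Bbbk e_\lambda$, all $\mathbf{C}_i(\lambda,\mu)$ finite-dimensional, and for each $\lambda,i$ only finitely many $\mu$ with $\mathbf{C}_i(\lambda,\mu)\ne0$ or $\mathbf{C}_i(\mu,\lambda)\ne0$. Graded $\mathbf{C}$-modules are $\Bbbk$-linear functors from $\mathbf{C}$ to graded vector spaces sending degree-$k$ morphisms to degree-$k$ maps; $\mathsf{M}\langle i\rangle(\lambda)_j=\mathsf{M}(\lambda)_{i+j}$; $\mathsf{P}(\lambda)=\mathbf{C}(\lambda,-)$. A complex is minimal if it has no direct summand of the form $\cdots\to0\to\mathsf{M}\xrightarrow{\sim}\mathsf{M}\to0\to\cdots$. *)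

From HB Require Import structures.
From Stdlib Require Import List.
From mathcomp Require Import all_boot all_order all_algebra.
Set Implicit Arguments. Unset Strict Implicit. Unset Printing Implicit Defensive.
Import Order.TTheory GRing.Theory Num.Theory.
Local Open Scope ring_scope.

(* Hom x y a is the homogeneous
   piece C_a(x,y) of degree a.  Composition g o f of f : C_a(x,y) and
   g : C_b(y,z) lands in C_c(x,z) for any c with a + b = c (the equality is
   passed explicitly to avoid casts). *)
Record PGCat (F : fieldType) := {
  Obj : Type;
  Hom : Obj -> Obj -> int -> lmodType F;
  cmp : forall (x y z : Obj) (a b c : int),
      a + b = c -> Hom y z b -> Hom x y a -> Hom x z c;
  cid : forall x : Obj, Hom x x 0;
  cmp_linl : forall x y z a b c (e : a + b = c) (g : Hom y z b) (r : F)
      (f1 f2 : Hom x y a),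
      cmp e g (r *: f1 + f2) = r *: cmp e g f1 + cmp e g f2;
  cmp_linr : forall x y z a b c (e : a + b = c) (g1 g2 : Hom y z b) (r : F)
      (f : Hom x y a),
      cmp e (r *: g1 + g2) f = r *: cmp e g1 f + cmp e g2 f;
  cmp_assoc : forall w x y z a b c ab bc abc
      (e1 : a + b = ab) (e2 : b + c = bc) (e3 : ab + c = abc)
      (e4 : a + bc = abc) (f : Hom w x a) (g : Hom x y b) (h : Hom y z c),
      cmp e3 h (cmp e1 g f) = cmp e4 (cmp e2 h g) f;
  cmp_idl : forall x y a (e : a + 0 = a) (f : Hom x y a), cmp e (cid y) f = f;
  cmp_idr : forall x y a (e : 0 + a = a) (f : Hom x y a), cmp e f (cid x) = f;
  hom_neg : forall x y a (f : Hom x y a), a < 0 -> f = 0;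
  hom_deg0_off : forall x y (f : Hom x y 0), x <> y -> f = 0;
  hom_deg0_diag : forall x (f : Hom x x 0), exists r : F, f = r *: cid x;
  hom_findim : forall x y a, exists b : seq (Hom x y a),
      forall f, exists r : nat -> F, f = \sum_(i < size b) r i *: b`_i;
  hom_locfin : forall x a, exists l : seq Obj, forall y,
      ((exists f : Hom x y a, f <> 0) \/ (exists f : Hom y x a, f <> 0)) ->
      Stdlib.Lists.List.In y l
}.
Arguments Hom {F} p _ _ _.
Arguments cid {F} p _.

(* Graded C-modules: gcar M x j = M(x)_j; a morphism of degree a acts as a
   map M(x)_j -> M(y)_j' with j + a = j'.  k-linear functor axioms. *)
Record GMod (F : fieldType) (C : PGCat F) := {
  gcar : Obj C -> int -> lmodType F;
  gact : forall (x y : Obj C) (a j j' : int),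
      j + a = j' -> Hom C x y a -> gcar x j -> gcar y j';
  gact_linv : forall x y a j j' (e : j + a = j') (f : Hom C x y a) (r : F) v w,
      gact e f (r *: v + w) = r *: gact e f v + gact e f w;
  gact_linf : forall x y a j j' (e : j + a = j') (f g : Hom C x y a) (r : F) v,
      gact e (r *: f + g) v = r *: gact e f v + gact e g v;
  gact_id : forall x j (e : j + 0 = j) v, gact e (cid C x) v = v;
  gact_comp : forall x y z a b ab j j1 j2
      (e1 : j + a = j1) (e2 : j1 + b = j2) (e3 : a + b = ab) (e4 : j + ab = j2)
      (f : Hom C x y a) (g : Hom C y z b) v,
      gact e4 (cmp e3 g f) v = gact e2 g (gact e1 f v)
}.

Unset Implicit Arguments.
Record GHom (F : fieldType) (C : PGCat F) (M N : GMod C) := {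
  ghom :> forall (x : Obj C) (j : int), gcar M x j -> gcar N x j;
  ghom_lin : forall (x : Obj C) (j : int) (r : F) (v w : gcar M x j),
      ghom x j (r *: v + w) = r *: ghom x j v + ghom x j w;
  ghom_nat : forall (x y : Obj C) (a j j' : int) (e : j + a = j')
      (f : Hom C x y a) (v : gcar M x j),
      ghom y j' (gact e f v) = gact e f (ghom x j v)
}.

Arguments GHom {F C} M N.
Arguments ghom {F C M N} _ _ _ _.
Set Implicit Arguments.
Unset Implicit Arguments.
Record GComplex (F : fieldType) (C : PGCat F) := {
  cobj : int -> GMod C;
  cd : forall j : int, GHom (cobj j) (cobj (j + 1));
  cdd : forall j x n v, cd (j + 1) x n (cd j x n v) = 0
}.

Arguments GComplex {F} C.
Arguments cobj {F C} _ _.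
Arguments cd {F C} _ _.
Arguments cdd {F C} _ _ _ _ _.
Set Implicit Arguments.
(* The module P(l)<k> : P(l)<k>(x)_j = C_{k+j}(l, x). *)
Lemma shift_eq (k j a j' : int) : j + a = j' -> k + j + a = k + j'.
Proof. by move=> <-; rewrite addrA. Qed.

Section Pk.
Variables (F : fieldType) (C : PGCat F) (l : Obj C) (k : int).

Definition Pk_car (x : Obj C) (j : int) : lmodType F := Hom C l x (k + j).

Definition Pk_act (x y : Obj C) (a j j' : int) (e : j + a = j')
  (f : Hom C x y a) (v : Pk_car x j) : Pk_car y j' := cmp (shift_eq k e) f v.

Lemma Pk_linv x y a j j' (e : j + a = j') (f : Hom C x y a) (r : F) v w :
  Pk_act e f (r *: v + w) = r *: Pk_act e f v + Pk_act e f w.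
Proof. exact: cmp_linl. Qed.

Lemma Pk_linf x y a j j' (e : j + a = j') (f g : Hom C x y a) (r : F) v :
  Pk_act e (r *: f + g) v = r *: Pk_act e f v + Pk_act e g v.
Proof. exact: cmp_linr. Qed.

Lemma Pk_id x j (e : j + 0 = j) v : Pk_act e (cid C x) v = v.
Proof. exact: cmp_idl. Qed.

Lemma Pk_comp x y z a b ab j j1 j2
  (e1 : j + a = j1) (e2 : j1 + b = j2) (e3 : a + b = ab) (e4 : j + ab = j2)
  (f : Hom C x y a) (g : Hom C y z b) v :
  Pk_act e4 (cmp e3 g f) v = Pk_act e2 g (Pk_act e1 f v).
Proof. rewrite /Pk_act; symmetry; exact: cmp_assoc. Qed.

Definition Pk : GMod C :=
  @Build_GMod F C Pk_car Pk_act Pk_linv Pk_linf Pk_id Pk_comp.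
End Pk.

(* M is the (internal) direct sum of the images of the maps
   inc s : P(lam s)<k s> -> M, s ranging over an arbitrary index type S. *)
Definition is_dsum (F : fieldType) (C : PGCat F) (M : GMod C) (S : Type)
  (lam : S -> Obj C) (k : S -> int) (inc : forall s, GHom (Pk (lam s) (k s)) M)
  : Prop :=
  (forall x n (v : gcar M x n), exists (l : seq S)
      (w : forall s, Hom C (lam s) x (k s + n)),
      v = \sum_(s <- l) inc s x n (w s)) /\
  (forall x n (l : seq S) (w : forall s, Hom C (lam s) x (k s + n)),
      Stdlib.Lists.List.NoDup l -> \sum_(s <- l) inc s x n (w s) = 0 ->
      forall s, Stdlib.Lists.List.In s l -> w s = 0).

(* v lies in the sum of the summands P(lam s)<k s> with P (k s);
   e.g. P := (fun t => i < t) gives X{>i}. *)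
Definition in_part (F : fieldType) (C : PGCat F) (M : GMod C) (S : Type)
  (lam : S -> Obj C) (k : S -> int) (inc : forall s, GHom (Pk (lam s) (k s)) M)
  (P : int -> Prop) (x : Obj C) (n : int) (v : gcar M x n) : Prop :=
  exists (l : seq S) (w : forall s, Hom C (lam s) x (k s + n)),
    (forall s, Stdlib.Lists.List.In s l -> P (k s)) /\ v = \sum_(s <- l) inc s x n (w s).

(* Minimality: X has no direct summand (in the category of complexes) of the
   form  ... -> 0 -> M --phi--> M -> 0 -> ...  with M nonzero and phi an
   isomorphism.  Placing the two copies of M in degrees j+1 and j+1+1, a
   direct summand is given by chain maps iota : Y -> X, pi : X -> Y with
   pi o iota = id, written out componentwise below. *)
Definition minimal (F : fieldType) (C : PGCat F) (X : GComplex C) : Prop :=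
  forall (j : int) (M : GMod C) (phi : GHom M M),
    (exists psi : GHom M M,
        (forall x n v, psi x n (phi x n v) = v) /\
        (forall x n v, phi x n (psi x n v) = v)) ->
    (exists x n (v : gcar M x n), v <> 0) ->
    ~ exists (i0 : GHom M (cobj X (j + 1))) (i1 : GHom M (cobj X (j + 1 + 1)))
             (p0 : GHom (cobj X (j + 1)) M) (p1 : GHom (cobj X (j + 1 + 1)) M),
        (forall x n v, cd X (j + 1) x n (i0 x n v) = i1 x n (phi x n v)) /\
        (forall x n v, cd X (j + 1 + 1) x n (i1 x n v) = 0) /\
        (forall x n v, p0 x n (cd X j x n v) = 0) /\
        (forall x n v, p1 x n (cd X (j + 1) x n v) = phi x n (p0 x n v)) /\
        (forall x n v, p0 x n (i0 x n v) = v) /\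
        (forall x n v, p1 x n (i1 x n v) = v).

(* Let P(l)<k> be a summand of X^j and P(m)<k'> one of X^(j+1) with k' <= k.
   The component P(l)<k> -> X^j -> X^(j+1) -> P(m)<k'> of the differential is,
   by Yoneda, right composition with an element c of C_(k'-k)(m, l).  If k' < k
   then c = 0 by positivity of the grading.  If k' = k then c is a scalar
   multiple of the identity of l = m, and if it were nonzero the component
   would be an isomorphism, so that P(l)<k> would split off X as a summand
   0 -> P(l)<k> -> P(l)<k> -> 0, contradicting minimality. *)

From HB Require Import structures.
From mathcomp Require Import all_boot all_order all_algebra.
From mathcomp Require Import boolp.
Import Order.TTheory GRing.Theory Num.Theory.
Local Open Scope ring_scope.
Set Implicit Arguments.
Unset Strict Implicit.
Unset Printing Implicit Defensive.

Lemma InP (T : eqType) (x : T) (s : seq T) : reflect (List.In x s) (x \in s).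
Proof.
elim: s => [|y s IHs] /=; first by right.
rewrite in_cons.
by apply: (iffP orP) => [[/eqP->|/IHs]|[->|/IHs]]; [left|right|left|right].
Qed.

Lemma uniq_NoDup (T : eqType) (s : seq T) : uniq s -> List.NoDup s.
Proof.
elim: s => [|x s IHs] /=; first by constructor.
by case/andP=> /negP xs /IHs; constructor=> // /InP.
Qed.

Lemma sum_count (V : nmodType) (I : eqType) (G : I -> V) (l L : seq I) :
  uniq L -> {subset l <= L} ->
  \sum_(i <- l) G i = \sum_(i <- L) G i *+ count_mem i l.
Proof.
move=> uL; elim: l => [|y l IHl] lL.
  by rewrite big_nil big1 // => i _; rewrite mulr0n.
rewrite big_cons IHl => [|i il]; last by apply: lL; rewrite in_cons il orbT.
under [RHS]eq_bigr do rewrite /= mulrnDr.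
rewrite big_split /=; congr (_ + _).
rewrite (bigD1_seq y) ?lL ?mem_head //= eqxx mulr1n big1 ?addr0 // => i.
by rewrite eq_sym => /negbTE ->; rewrite mulr0n.
Qed.

Section LinearMaps.
Variables (F : fieldType) (V W : lmodType F) (f : V -> W).
Hypothesis f_linear : linear f.
Let lf : {linear V -> W} :=
  HB.pack f (GRing.isLinear.Build F V W *:%R f f_linear).

Lemma linear_map0 : f 0 = 0.
Proof. exact: raddf0 lf. Qed.
Lemma linear_mapZ a v : f (a *: v) = a *: f v.
Proof. exact: linearZZ lf a v. Qed.
Lemma linear_mapB v w : f (v - w) = f v - f w.
Proof. exact: raddfB lf v w. Qed.
Lemma linear_mapMn v m : f (v *+ m) = f v *+ m.
Proof. exact: raddfMn lf m v. Qed.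
Lemma linear_map_sum (I : Type) (r : seq I) (G : I -> V) :
  f (\sum_(i <- r) G i) = \sum_(i <- r) f (G i).
Proof. exact: (raddf_sum lf r xpredT G). Qed.
End LinearMaps.

Lemma ghom_linear (F : fieldType) (C : PGCat F) (M N : GMod C) (g : GHom M N)
    x n :
  linear (g x n).
Proof. exact: ghom_lin. Qed.
Arguments ghom_linear {F C M N} g x n.

Section GradedMorphisms.
Variables (F : fieldType) (C : PGCat F).

Lemma ghom0 (M N : GMod C) (g : GHom M N) x n : g x n 0 = 0.
Proof. exact: linear_map0 (ghom_linear g x n). Qed.

Lemma cmpf0 x y z a b c (e : a + b = c) (g : Hom C y z b) :
  cmp e g (0 : Hom C x y a) = 0.
Proof. exact: linear_map0 (cmp_linl e g). Qed.

(* The identity of x, seen in a degree such as k - k that is 0 only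
   propositionally. *)
Definition castid (x : Obj C) (c : int) (e : 0 = c) : Hom C x x c :=
  eq_rect 0 (Hom C x x) (cid C x) c e.

Lemma cmp_castid x y c (e0 : 0 = c) a (e : c + a = a) (f : Hom C x y a) :
  cmp e f (castid x e0) = f.
Proof. by case: c / e0 e => e; exact: cmp_idr. Qed.

Lemma hom_cast0_off x y c (e : 0 = c) (f : Hom C x y c) : x <> y -> f = 0.
Proof. by case: c / e f; exact: hom_deg0_off. Qed.

Lemma hom_cast0_scalar x c (e : 0 = c) (f : Hom C x x c) :
  exists r, f = r *: castid x e.
Proof. by case: c / e f; exact: hom_deg0_diag. Qed.

Definition gid (M : GMod C) : GHom M M :=
  @Build_GHom F C M M (fun x n v => v)
    (fun _ _ _ _ _ => erefl) (fun _ _ _ _ _ _ _ _ => erefl).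

Definition gcomp (M N P : GMod C) (g : GHom N P) (f : GHom M N) : GHom M P.
Proof.
refine (@Build_GHom F C M P (fun x n v => g x n (f x n v)) _ _).
- by move=> x n r v w; rewrite !ghom_lin.
- by move=> x y a j j' e h v; rewrite !ghom_nat.
Defined.

Definition gscale (M : GMod C) (r : F) : GHom M M.
Proof.
refine (@Build_GHom F C M M (fun x n v => r *: v) _ _).
- by move=> x n a u v; rewrite scalerDr !scalerA mulrC.
- by move=> x y a j j' e f v; rewrite (linear_mapZ (gact_linv (g0 := M) e f)).
Defined.

Definition Pk_unit (l : Obj C) (k : int) : gcar (Pk l k) l (- k) :=
  castid l (esym (subrr k)).

Lemma yoneda_eq (k n : int) : - k + (k + n) = n.
Proof. by rewrite addKr. Qed.

Section PkMorphisms.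
Variables (l l' : Obj C) (k k' : int) (phi : GHom (Pk l k) (Pk l' k')).

Definition yoneda_elt : Hom C l' l (k' + - k) := phi l (- k) (Pk_unit l k).

Lemma yonedaE x n (h : Hom C l x (k + n)) :
  phi x n h = cmp (shift_eq k' (yoneda_eq k n)) h yoneda_elt.
Proof.
transitivity (phi x n (Pk_act (yoneda_eq k n) h (Pk_unit l k))).
  by rewrite /Pk_act cmp_castid.
exact: ghom_nat.
Qed.

Lemma yoneda_elt_eq0 : yoneda_elt = 0 -> forall x n h, phi x n h = 0.
Proof. by move=> phi0 x n h; rewrite yonedaE phi0 cmpf0. Qed.

Lemma Pk_hom_lt_eq0 : k' < k -> forall x n h, phi x n h = 0.
Proof.
by move=> lt_k; apply: yoneda_elt_eq0; apply: hom_neg; rewrite subr_lt0.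
Qed.

End PkMorphisms.

Lemma Pk_hom_retract (l l' : Obj C) (k k' : int)
    (phi : GHom (Pk l k) (Pk l' k')) :
  k' <= k -> (exists x n v, phi x n v != 0) ->
  exists psi : GHom (Pk l' k') (Pk l k), forall x n v, psi x n (phi x n v) = v.
Proof.
move=> le_k [x [n [v phi_v]]].
have [lt_k|ge_k] := ltP k' k; first by rewrite Pk_hom_lt_eq0 ?eqxx in phi_v.
have eq_k : k' = k by apply/eqP; rewrite eq_le le_k ge_k.
subst k'.
have eq_l : l' = l.
  apply: contrapT => ne; move: phi_v; rewrite yoneda_elt_eq0 ?eqxx //.
  exact: hom_cast0_off (esym (subrr k)) _ ne.
subst l'.
have [r er] := hom_cast0_scalar (esym (subrr k)) (yoneda_elt phi).
have phiE y m h : phi y m h = r *: h.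
  by rewrite yonedaE er (linear_mapZ (cmp_linl _ h)) cmp_castid.
have r_neq0 : r != 0 by apply: contraNneq phi_v => r0; rewrite phiE r0 scale0r.
by exists (gscale _ r^-1) => y m h; rewrite /= phiE scalerA mulVf // scale1r.
Qed.

End GradedMorphisms.

Section DirectSums.
Variables (F : fieldType) (C : PGCat F) (M : GMod C) (S : Type).
Variables (lam : S -> Obj C) (k : S -> int).
Variable inc : forall s, GHom (Pk (lam s) (k s)) M.
Hypothesis dec : is_dsum inc.

Lemma dsum_sum_count x n (l L : seq {classic S})
    (w : forall s, Hom C (lam s) x (k s + n)) :
  uniq L -> {subset l <= L} ->
  \sum_(s <- l) inc s x n (w s) =
    \sum_(s <- L) inc s x n (w s *+ count_mem s l).
Proof.
move=> uL lL; rewrite (sum_count _ uL lL); apply: eq_bigr => s _.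
by rewrite (linear_mapMn (ghom_linear (inc s) x n)).
Qed.

Lemma dsum_coef_unique x n (l1 l2 : seq {classic S})
    (w1 w2 : forall s, Hom C (lam s) x (k s + n)) :
  \sum_(s <- l1) inc s x n (w1 s) = \sum_(s <- l2) inc s x n (w2 s) ->
  forall t : {classic S}, w1 t *+ count_mem t l1 = w2 t *+ count_mem t l2.
Proof.
move=> E t; set L := undup (l1 ++ l2).
have sub1 : {subset l1 <= L} by move=> s; rewrite mem_undup mem_cat => ->.
have sub2 : {subset l2 <= L} by move=> s; rewrite mem_undup mem_cat orbC => ->.
have [tL|tNL] := boolP (t \in L); last first.
  have [t1 t2] := (contra (@sub1 t) tNL, contra (@sub2 t) tNL).
  by rewrite (count_memPn t1) (count_memPn t2) !mulr0n.
apply/eqP; rewrite -subr_eq0; apply/eqP.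
pose w (s : {classic S}) := w1 s *+ count_mem s l1 - w2 s *+ count_mem s l2.
apply: (dec.2 x n L w _ _ t).
- exact: (@uniq_NoDup {classic S} _ (undup_uniq _)).
- under eq_bigr do rewrite (linear_mapB (ghom_linear (inc _) x n)).
  by rewrite sumrB -!dsum_sum_count ?undup_uniq // E subrr.
- exact/(@InP {classic S}).
Qed.

Lemma dsum_rep x n (v : gcar M x n) :
  exists (l : seq {classic S}) (w : forall s, Hom C (lam s) x (k s + n)),
    v = \sum_(s <- l) inc s x n (w s).
Proof. exact: dec.1. Qed.

(* An index may occur several times in a representation, hence the
   multiplicity [count_mem]. *)
Definition dsum_coef (t : S) x n (v : gcar M x n) : Hom C (lam t) x (k t + n) :=
  let: exist l rep := constructive_indefinite_description (dec.1 x n v) in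
  let: exist w _ := constructive_indefinite_description rep in
  w t *+ count_mem (t : {classic S}) l.

Lemma dsum_coefE x n (v : gcar M x n) (l : seq {classic S}) w :
  v = \sum_(s <- l) inc s x n (w s) ->
  forall t : {classic S}, dsum_coef t v = w t *+ count_mem t l.
Proof.
move=> E t; rewrite /dsum_coef.
case: constructive_indefinite_description => l' rep.
case: constructive_indefinite_description => w' E'.
by apply: dsum_coef_unique; rewrite -E' -E.
Qed.

Lemma dsum_coef_linear t x n : linear (@dsum_coef t x n).
Proof.
move=> r u v.
have [l1 [w1 E1]] := dsum_rep u; have [l2 [w2 E2]] := dsum_rep v.
set L := undup (l1 ++ l2).
have sub1 : {subset l1 <= L} by move=> s; rewrite mem_undup mem_cat => ->.
have sub2 : {subset l2 <= L} by move=> s; rewrite mem_undup mem_cat orbC => ->.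
rewrite (dsum_sum_count _ (undup_uniq _) sub1) in E1.
rewrite (dsum_sum_count _ (undup_uniq _) sub2) in E2.
have E : r *: u + v = \sum_(s <- L) inc s x n
    (r *: (w1 s *+ count_mem s l1) + w2 s *+ count_mem s l2).
  rewrite E1 E2 scaler_sumr -big_split; apply: eq_bigr => s _.
  by rewrite ghom_lin.
by rewrite (dsum_coefE E) (dsum_coefE E1) (dsum_coefE E2) mulrnDl scalerMnr.
Qed.

Lemma dsum_coef_nat t x y a j j' (e : j + a = j') (f : Hom C x y a)
    (v : gcar M x j) :
  dsum_coef t (gact e f v) = Pk_act e f (dsum_coef t v).
Proof.
have [l [w E]] := dsum_rep v.
have Ef : gact e f v = \sum_(s <- l) inc s y j' (Pk_act e f (w s)).
  rewrite E (linear_map_sum (gact_linv e f)); apply: eq_bigr => s _.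
  symmetry; exact: ghom_nat.
by rewrite (dsum_coefE Ef) (dsum_coefE E) /Pk_act (linear_mapMn (cmp_linl _ f)).
Qed.

Definition dsum_proj (t : S) : GHom M (Pk (lam t) (k t)) :=
  @Build_GHom F C M (Pk (lam t) (k t)) (@dsum_coef t) (@dsum_coef_linear t)
    (@dsum_coef_nat t).

Lemma dsum_decomp x n (v : gcar M x n) :
  exists L : seq {classic S}, v = \sum_(t <- L) inc t x n (dsum_proj t x n v).
Proof.
have [l [w E]] := dsum_rep v; exists (undup l).
have sub : {subset l <= undup l} by move=> s; rewrite mem_undup.
rewrite {1}E (dsum_sum_count w (undup_uniq l) sub).
by apply: eq_bigr => t _; rewrite /= (dsum_coefE E).
Qed.

Lemma in_part_proj (P : int -> Prop) x n (v : gcar M x n) :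
  (forall t, ~ P (k t) -> dsum_proj t x n v = 0) -> in_part inc P v.
Proof.
move=> proj0; have [L E] := dsum_decomp v.
exists [seq t <- L | dsum_proj t x n v != 0], (fun t => dsum_proj t x n v).
split.
  move=> t /(@InP {classic S}); rewrite mem_filter => /andP [nz _].
  by apply: contrapT => nP; rewrite proj0 ?eqxx in nz.
rewrite big_filter big_mkcond {1}E; apply: eq_bigr => t _.
by case: eqP => [->|]; rewrite ?ghom0.
Qed.

End DirectSums.

Section MinimalComplexes.
Variables (F : fieldType) (C : PGCat F) (X : GComplex C).
Hypothesis minX : minimal X.

Lemma minimal_retract_eq0 j (M : GMod C) (alpha : GHom M (cobj X (j + 1)))
    (beta : GHom (cobj X (j + 1 + 1)) M) :
  (forall x n v, beta x n (cd X (j + 1) x n (alpha x n v)) = v) ->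
  forall x n (v : gcar M x n), v = 0.
Proof.
move=> betaK x n v; case: (eqVneq v 0) => // nz; exfalso.
apply: (@minX j M (gid M)); first by exists (gid M).
  by exists x, n, v; apply/eqP.
(* M -id-> M embeds through alpha, d \o alpha and retracts through
   beta \o d, beta. *)
exists alpha, (gcomp (cd X (j + 1)) alpha), (gcomp beta (cd X (j + 1))), beta.
by do ![split]; move=> y m u /=; rewrite ?cdd ?ghom0 ?betaK.
Qed.

Lemma minimal_d_proj_eq0 j (l : Obj C) (kl : int)
    (alpha : GHom (Pk l kl) (cobj X (j + 1)))
    (S : Type) (lam : S -> Obj C) (k : S -> int)
    (inc : forall s, GHom (Pk (lam s) (k s)) (cobj X (j + 1 + 1)))
    (dec : is_dsum inc) (t : S) :
  k t <= kl ->
  forall x n h, dsum_proj dec t x n (cd X (j + 1) x n (alpha x n h)) = 0.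
Proof.
move=> le_k x n h.
set phi := gcomp (dsum_proj dec t) (gcomp (cd X (j + 1)) alpha).
suff phi0 : phi x n h = 0 by exact: phi0.
case: (eqVneq (phi x n h) 0) => // nz.
have [|psi psiK] := Pk_hom_retract (phi := phi) le_k; first by exists x, n, h.
have h0 := minimal_retract_eq0 (alpha := alpha)
  (beta := gcomp psi (dsum_proj dec t)) psiK h.
by rewrite h0 ghom0.
Qed.

End MinimalComplexes.

Theorem lemma3p2 (F : fieldType) (C : PGCat F) (X : GComplex C)
  (minX : minimal X)
  (S : int -> Type) (lam : forall j, S j -> Obj C) (k : forall j, S j -> int)
  (inc : forall j (s : S j), GHom (Pk (lam j s) (k j s)) (cobj X j))
  (dec : forall j, is_dsum (inc j)) :
  forall (i j : int) (x : Obj C) (n : int) (v : gcar (cobj X j) x n),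
    in_part (inc j) (fun t => i < t) v ->
    in_part (inc (j + 1)) (fun t => i + 1 < t) (cd X j x n v).
Proof.
move=> i j; have [j' ->{j}] : exists j', j = j' + 1.
  by exists (j - 1); rewrite subrK.
move=> x n v [l [w [l_gt_i ->]]].
apply: (in_part_proj (dec := dec _)) => t /negP; rewrite -leNgt => le_kt.
rewrite !(linear_map_sum (ghom_linear _ x n)).
apply: (@big1_seq _ _ _ {classic S (j' + 1)}) => s /andP [_ /InP /l_gt_i lt_ks].
by apply: (minimal_d_proj_eq0 minX); apply: le_trans le_kt _; rewrite lezD1.
Qed.
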